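(* In the setting described in the context, assume moreover that $\kappa_g>0$ everywhere on $\partial K$. Then, regarding $r$ as a function of $\omega$ (the support function), $$\frac{dr}{d\omega}=-\frac{\ell(r)c(r)}{c(x)}=-\frac{(1-k\,a(r))\,\ell(x)}{1-k\,a(x)} .$$
   Context: $M$ is $\mathbb{E}^2$, $\mathbb{S}^2$ or $\mathbb{H}^2$ of constant curvature $k$ ($k=0$, $k>0$, $k<0$). Functions: for $k>0$, $\ell(r)=\sin(\sqrt{k}r)/\sqrt{k}$, $a(r)=(1-\cos(\sqrt{k}r))/k$, $c(r)=\sqrt{k}\cot(\sqrt{k}r)$; for $k=0$, $\ell(r)=r$, $a(r)=r^2/2$, $c(r)=1/r$; for $k<0$, $\ell(r)=\sinh(\sqrt{-k}r)/\sqrt{-k}$, $a(r)=(1-\cosh(\sqrt{-k}r))/k$, $c(r)=\sqrt{-k}\coth(\sqrt{-k}r)$ (these make sense for negative $r$ too; $\ell(r)c(r)=1-ka(r)$). Setting: fix $O\in M$; $K\subset M$ is a compact convex set with nonempty interior and $C^2$ boundary (on $\mathbb{S}^2$, $K$ lies in the open hemisphere centered at $O$); $\partial K$ is oriented counterclockwise and parametrized by arclength $s$; $\kappa_g\ge0$ is its geodesic curvature. For $P=P(s)\in\partial K$ let $\lambda$ be the tangent geodesic (support line) of $K$ at $P$. For an angle $\omega$ let $\gamma_\omega$ be the unit-speed geodesic with $\gamma_\omega(0)=O$ and initial direction at angle $\omega$. Then $\omega=\omega(s)$ (chosen continuous in $s$) and $r=r(s)\in\mathbb{R}$ are determined by: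 $\lambda$ is perpendicular to $\gamma_\omega$ at $F=\gamma_\omega(r)$ and $K$ lies in the closed half-plane bounded by $\lambda$ containing $\gamma_\omega(t)$ for $t<r$. $x=x(s)$ is the signed distance along $\lambda$ from $F$ to $P$, positive iff $P$ lies on the ray from $F$ in the direction obtained by rotating $\gamma_\omega'(r)$ clockwise by $\pi/2$. *)

From Stdlib Require Import Reals.
From Coquelicot Require Import Coquelicot.
Open Scope R_scope.

Definition ell (k r : R) : R :=
  if Rlt_dec 0 k then sin (sqrt k * r) / sqrt k
  else if Rlt_dec k 0 then sinh (sqrt (- k) * r) / sqrt (- k)
  else r.

Definition acurv (k r : R) : R :=
  if Rlt_dec 0 k then (1 - cos (sqrt k * r)) / k
  else if Rlt_dec k 0 then (1 - cosh (sqrt (- k) * r)) / k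
  else r ^ 2 / 2.

Definition ccurv (k r : R) : R :=
  if Rlt_dec 0 k then sqrt k * (cos (sqrt k * r) / sin (sqrt k * r))
  else if Rlt_dec k 0 then sqrt (- k) * (cosh (sqrt (- k) * r) / sinh (sqrt (- k) * r))
  else 1 / r.

(** * The model surface M_k (E^2, S^2 or H^2 of curvature k)
    M_k = { q in R^3 | k (q1^2 + q2^2) + q3^2 = 1 } (for k <= 0 only the
    sheet q3 > 0), with Riemannian metric  dq1^2 + dq2^2 + dq3^2 / k
    (for k = 0, M_0 is the plane q3 = 1 with the Euclidean metric). *)
Record V3 := mkV3 { v1 : R; v2 : R; v3 : R }.

Definition vadd (u v : V3) : V3 := mkV3 (v1 u + v1 v) (v2 u + v2 v) (v3 u + v3 v).
Definition vscal (c : R) (v : V3) : V3 := mkV3 (c * v1 v) (c * v2 v) (c * v3 v).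
Definition vsub (u v : V3) : V3 := vadd u (vscal (-1) v).

Definition kdot (k : R) (u v : V3) : R := k * (v1 u * v1 v + v2 u * v2 v) + v3 u * v3 v.

Definition gmet (k : R) (u v : V3) : R :=
  v1 u * v1 v + v2 u * v2 v + (if Req_EM_T k 0 then 0 else v3 u * v3 v / k).

Definition inM (k : R) (q : V3) : Prop := kdot k q q = 1 /\ (0 < k \/ 0 < v3 q).
Definition tangentM (k : R) (p v : V3) : Prop := kdot k p v = 0.
Definition unitM (k : R) (v : V3) : Prop := gmet k v v = 1.

Definition Opt : V3 := mkV3 0 0 1.

Definition geod (k : R) (p u : V3) (t : R) : V3 :=
  vadd (vscal (1 - k * acurv k t) p) (vscal (ell k t) u).

Definition dirO (w : R) : V3 := mkV3 (cos w) (sin w) 0.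
Definition gam (k w t : R) : V3 := geod k Opt (dirO w) t.

(** rotation by +pi/2 (counterclockwise; at O it is (v1,v2,0) |-> (-v2,v1,0))
    in the tangent plane at p *)
Definition rotccw (k : R) (p v : V3) : V3 :=
  mkV3 (v2 p * v3 v - v3 p * v2 v) (v3 p * v1 v - v1 p * v3 v) (k * (v1 p * v2 v - v2 p * v1 v)).
Definition rotcw (k : R) (p v : V3) : V3 := vscal (-1) (rotccw k p v).

Definition vderive (c : R -> V3) (t : R) : V3 :=
  mkV3 (Derive (fun s => v1 (c s)) t) (Derive (fun s => v2 (c s)) t) (Derive (fun s => v3 (c s)) t).

Definition dinf (p q : V3) : R :=
  Rmax (Rabs (v1 p - v1 q)) (Rmax (Rabs (v2 p - v2 q)) (Rabs (v3 p - v3 q))).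

Definition interiorM (k : R) (K : V3 -> Prop) (q : V3) : Prop :=
  K q /\ exists eps, 0 < eps /\ forall q', inM k q' -> dinf q q' < eps -> K q'.

Definition boundaryM (k : R) (K : V3 -> Prop) (q : V3) : Prop :=
  K q /\ ~ interiorM k K q.

Definition closedS (K : V3 -> Prop) : Prop :=
  forall q, (forall eps, 0 < eps -> exists q', K q' /\ dinf q q' < eps) -> K q.

Definition boundedS (K : V3 -> Prop) : Prop :=
  exists B, forall q, K q -> Rabs (v1 q) <= B /\ Rabs (v2 q) <= B /\ Rabs (v3 q) <= B.

(** geodesic convexity: the (unique minimizing) geodesic segment between
    two points of K lies in K *)
Definition convexM (k : R) (K : V3 -> Prop) : Prop :=
  forall p q u d, K p -> K q -> tangentM k p u -> unitM k u -> 0 <= d ->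
    (0 < k -> d * sqrt k < PI) -> geod k p u d = q ->
    forall t, 0 <= t <= d -> K (geod k p u t).

(** K compact convex with nonempty interior; on S^2 inside the open
    hemisphere centered at O *)
Definition convex_body (k : R) (K : V3 -> Prop) : Prop :=
  (forall q, K q -> inM k q) /\ closedS K /\ boundedS K /\ convexM k K /\
  (exists q, interiorM k K q) /\
  (0 < k -> forall q, K q -> 0 < v3 q).

Definition C2fun (f : R -> R) : Prop :=
  forall s, ex_derive f s /\ ex_derive (Derive f) s /\ continuity_pt (Derive (Derive f)) s.

Definition C2curve (P : R -> V3) : Prop :=
  C2fun (fun s => v1 (P s)) /\ C2fun (fun s => v2 (P s)) /\ C2fun (fun s => v3 (P s)).

Definition arclength_boundary (k : R) (K : V3 -> Prop) (P : R -> V3) (L : R) : Prop :=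
  0 < L /\ (forall s, P (s + L) = P s) /\
  (forall s1 s2, 0 <= s1 < L -> 0 <= s2 < L -> P s1 = P s2 -> s1 = s2) /\
  (forall q, boundaryM k K q <-> exists s, P s = q) /\
  C2curve P /\
  (forall s, unitM k (vderive P s)).

(** counterclockwise orientation: K lies to the left of the boundary, i.e.
    the geodesic leaving P(s) in the direction of the left normal enters the interior *)
Definition ccw_oriented (k : R) (K : V3 -> Prop) (P : R -> V3) : Prop :=
  forall s, exists delta, 0 < delta /\
    forall t, 0 < t < delta -> interiorM k K (geod k (P s) (rotccw k (P s) (vderive P s)) t).

Definition kappa_g (k : R) (P : R -> V3) (s : R) : R :=
  gmet k (vderive (vderive P) s) (rotccw k (P s) (vderive P s)).

(** (w, rr, xx) = (omega(s), r(s), x(s)) at the point P(s):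
    - lambda = tangent geodesic t |-> geod k (P s) (P' s) t;
    - lambda passes through F = gamma_w(rr) and is perpendicular there to gamma_w;
    - K lies in the closed half-plane bounded by lambda containing gamma_w(t)
      for t slightly less than rr, i.e. on the side opposite to N = gamma_w'(rr);
    - on S^2, rr is the signed distance from O to lambda (|rr| < pi/(2 sqrt k));
    - xx is the signed distance along lambda from F to P(s), positive towards
      the direction obtained by rotating N clockwise by pi/2. *)
Definition support_data (k : R) (K : V3 -> Prop) (P : R -> V3) (s w rr xx : R) : Prop :=
  let F := gam k w rr in
  let N := vderive (gam k w) rr in
  (exists t0, F = geod k (P s) (vderive P s) t0 /\
              gmet k N (vderive (geod k (P s) (vderive P s)) t0) = 0) /\
  (forall q, K q -> gmet k (vsub q F) N <= 0) /\
  (0 < k -> Rabs rr * sqrt k < PI / 2) /\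
  P s = geod k F (rotcw k F N) xx /\
  (0 < k -> Rabs xx * sqrt k < PI).

(* The support line lambda lies in the plane through O on which the linear form
   [cosk r * along_w v - ell r * v3 v] vanishes, and both P(s) and P'(s) satisfy it; together
   with the position of P on lambda and unit speed this expresses P and P' in the frame of
   gamma_w.  Differentiating the two identities in s (implicit differentiation in
   Caratheodory's slope form) gives omega' = cosk(x) kappa_g / cosk(r) > 0 and
   r' = - ell(x) kappa_g, so omega is strictly increasing and dr/domega = r'/omega'. *)

From Stdlib Require Import Reals Lra ClassicalEpsilon.
From Coquelicot Require Import Coquelicot.
Open Scope R_scope.

Definition cosk (k y : R) : R := 1 - k * acurv k y.

Lemma ell_cosk_pos k y : 0 < k ->
  ell k y = sin (sqrt k * y) / sqrt k /\ cosk k y = cos (sqrt k * y).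
Proof.
  intros Hk. unfold ell, cosk, acurv. destruct (Rlt_dec 0 k); [|lra].
  split; [reflexivity | field; lra].
Qed.

Lemma ell_cosk_neg k y : k < 0 ->
  ell k y = sinh (sqrt (- k) * y) / sqrt (- k) /\ cosk k y = cosh (sqrt (- k) * y).
Proof.
  intros Hk. unfold ell, cosk, acurv.
  destruct (Rlt_dec 0 k); [lra|]. destruct (Rlt_dec k 0); [|lra].
  split; [reflexivity | field; lra].
Qed.

Lemma ell_cosk_zero y : ell 0 y = y /\ cosk 0 y = 1.
Proof.
  unfold ell, cosk, acurv. destruct (Rlt_dec 0 0); [lra|]. destruct (Rlt_dec 0 0); [lra|].
  split; [reflexivity | ring].
Qed.

Lemma cosk_ell_pythagoras k y : cosk k y * cosk k y + k * (ell k y * ell k y) = 1.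
Proof.
  destruct (Rlt_dec 0 k) as [Hk|Hk]; [|destruct (Rlt_dec k 0) as [Hk'|Hk']].
  - destruct (ell_cosk_pos k y Hk) as [-> ->].
    assert (Hs : sqrt k * sqrt k = k) by (apply sqrt_sqrt; lra).
    assert (0 < sqrt k) by (apply sqrt_lt_R0; lra).
    pose proof (sin2_cos2 (sqrt k * y)) as Hsc. unfold Rsqr in Hsc.
    rewrite <- Hsc. set (a := sqrt k) in *. rewrite <- Hs. field. lra.
  - destruct (ell_cosk_neg k y Hk') as [-> ->].
    assert (Hs : sqrt (- k) * sqrt (- k) = - k) by (apply sqrt_sqrt; lra).
    assert (0 < sqrt (- k)) by (apply sqrt_lt_R0; lra).
    assert (Hch : cosh (sqrt (- k) * y) * cosh (sqrt (- k) * y)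
                  - sinh (sqrt (- k) * y) * sinh (sqrt (- k) * y) = 1).
    { unfold cosh, sinh. set (z := sqrt (- k) * y).
      assert (exp z * exp (- z) = 1) by (rewrite <- exp_plus, Rplus_opp_r; apply exp_0).
      nra. }
    rewrite <- Hch. set (a := sqrt (- k)) in *.
    replace k with (- (a * a)) by lra. field. lra.
  - replace k with 0 by lra. destruct (ell_cosk_zero y) as [-> ->]. ring.
Qed.

Lemma is_derive_ell k y : is_derive (ell k) y (cosk k y).
Proof.
  destruct (Rlt_dec 0 k) as [Hk|Hk]; [|destruct (Rlt_dec k 0) as [Hk'|Hk']].
  - assert (0 < sqrt k) by (apply sqrt_lt_R0; lra).
    apply (is_derive_ext (fun y => sin (sqrt k * y) / sqrt k)).
    { intros t; symmetry; apply (ell_cosk_pos k t Hk). }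
    rewrite (proj2 (ell_cosk_pos k y Hk)). auto_derive; [auto | field; lra].
  - assert (0 < sqrt (- k)) by (apply sqrt_lt_R0; lra).
    apply (is_derive_ext (fun y => sinh (sqrt (- k) * y) / sqrt (- k))).
    { intros t; symmetry; apply (ell_cosk_neg k t Hk'). }
    rewrite (proj2 (ell_cosk_neg k y Hk')). unfold sinh, cosh.
    auto_derive; [auto | field; lra].
  - replace k with 0 by lra. apply (is_derive_ext (fun y => y)).
    { intros t; symmetry; apply ell_cosk_zero. }
    rewrite (proj2 (ell_cosk_zero y)). auto_derive; auto.
Qed.

Lemma is_derive_cosk k y : is_derive (cosk k) y (- k * ell k y).
Proof.
  destruct (Rlt_dec 0 k) as [Hk|Hk]; [|destruct (Rlt_dec k 0) as [Hk'|Hk']].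
  - assert (Hs : sqrt k * sqrt k = k) by (apply sqrt_sqrt; lra).
    assert (0 < sqrt k) by (apply sqrt_lt_R0; lra).
    apply (is_derive_ext (fun y => cos (sqrt k * y))).
    { intros t; symmetry; apply (ell_cosk_pos k t Hk). }
    rewrite (proj1 (ell_cosk_pos k y Hk)). auto_derive; [auto|].
    set (a := sqrt k) in *. rewrite <- Hs. field. lra.
  - assert (Hs : sqrt (- k) * sqrt (- k) = - k) by (apply sqrt_sqrt; lra).
    assert (0 < sqrt (- k)) by (apply sqrt_lt_R0; lra).
    apply (is_derive_ext (fun y => cosh (sqrt (- k) * y))).
    { intros t; symmetry; apply (ell_cosk_neg k t Hk'). }
    rewrite (proj1 (ell_cosk_neg k y Hk')). unfold sinh, cosh. auto_derive; [auto|].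
    set (a := sqrt (- k)) in *. replace k with (- (a * a)) by lra. field. lra.
  - replace k with 0 by lra. apply (is_derive_ext (fun _ => 1)).
    { intros t; symmetry; apply ell_cosk_zero. }
    auto_derive; [auto | ring].
Qed.

(* The bound on [r] in [support_data]: on S^2 the foot F lies in the open hemisphere around O. *)
Definition quarter_range (k y : R) : Prop := 0 < k -> Rabs y * sqrt k < PI / 2.

Lemma quarter_range_interval k y1 y y2 :
  quarter_range k y1 -> quarter_range k y2 -> y1 <= y <= y2 -> quarter_range k y.
Proof.
  intros H1 H2 Hy Hk. specialize (H1 Hk). specialize (H2 Hk).
  assert (0 < sqrt k) by (apply sqrt_lt_R0; lra).
  assert (Rabs y <= Rmax (Rabs y1) (Rabs y2)).
  { unfold Rmax, Rabs. repeat destruct Rcase_abs; destruct Rle_dec; lra. }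
  unfold Rmax in *. destruct Rle_dec; nra.
Qed.

Lemma quarter_range_open k y : quarter_range k y ->
  exists e, 0 < e /\ forall z, Rabs (z - y) < e -> quarter_range k z.
Proof.
  intros Hy. destruct (Rlt_dec 0 k) as [Hk|Hk].
  - specialize (Hy Hk). assert (0 < sqrt k) by (apply sqrt_lt_R0; lra).
    exists ((PI / 2 - Rabs y * sqrt k) / sqrt k). split; [apply Rdiv_lt_0_compat; lra|].
    intros z Hz _. apply (Rmult_lt_compat_r (sqrt k)) in Hz; [|lra].
    replace ((PI / 2 - Rabs y * sqrt k) / sqrt k * sqrt k) with (PI / 2 - Rabs y * sqrt k)
      in Hz by (field; lra).
    pose proof (Rabs_triang_inv z y). nra.
  - exists 1. split; [lra|]. intros z _ Hk'. lra.
Qed.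

Lemma cosk_pos k y : quarter_range k y -> 0 < cosk k y.
Proof.
  intros Hy. destruct (Rlt_dec 0 k) as [Hk|Hk]; [|destruct (Rlt_dec k 0) as [Hk'|Hk']].
  - rewrite (proj2 (ell_cosk_pos k y Hk)). specialize (Hy Hk).
    assert (0 < sqrt k) by (apply sqrt_lt_R0; lra).
    assert (Rabs (sqrt k * y) < PI / 2) by (rewrite Rabs_mult, Rabs_pos_eq; lra).
    apply Rabs_def2 in H0. apply cos_gt_0; lra.
  - rewrite (proj2 (ell_cosk_neg k y Hk')). unfold cosh.
    pose proof (exp_pos (sqrt (- k) * y)). pose proof (exp_pos (- (sqrt (- k) * y))). lra.
  - replace k with 0 by lra. rewrite (proj2 (ell_cosk_zero y)). lra.
Qed.

Lemma ell_div_cosk_increasing k y1 y2 :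
  quarter_range k y1 -> quarter_range k y2 -> y1 < y2 ->
  ell k y1 / cosk k y1 < ell k y2 / cosk k y2.
Proof.
  intros H1 H2 Hlt.
  apply (incr_function_le (fun y => ell k y / cosk k y) y1 y2 (fun y => / (cosk k y * cosk k y)));
    simpl; [| | lra | lra | lra]; intros y Hy1 Hy2;
    pose proof (cosk_pos k y (quarter_range_interval k y1 y y2 H1 H2 (conj Hy1 Hy2))).
  - replace (/ (cosk k y * cosk k y))
      with ((cosk k y * cosk k y - ell k y * (- k * ell k y)) / cosk k y ^ 2).
    + apply (is_derive_div (ell k) (cosk k)); [apply is_derive_ell | apply is_derive_cosk | lra].
    + replace (cosk k y * cosk k y - ell k y * (- k * ell k y)) with 1
        by (pose proof (cosk_ell_pythagoras k y); lra).
      field. lra.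
  - apply Rinv_0_lt_compat. nra.
Qed.

Lemma ell_neq0 k y : quarter_range k y -> y <> 0 -> ell k y <> 0.
Proof.
  intros Hy Hy0 Hell.
  assert (H0 : quarter_range k 0) by (intros Hk; rewrite Rabs_R0; pose proof PI_RGT_0; lra).
  assert (Hz : ell k 0 / cosk k 0 = 0).
  { destruct (Rlt_dec 0 k) as [Hk|Hk]; [|destruct (Rlt_dec k 0) as [Hk'|Hk']].
    - rewrite (proj1 (ell_cosk_pos k 0 Hk)), Rmult_0_r, sin_0. unfold Rdiv. ring.
    - rewrite (proj1 (ell_cosk_neg k 0 Hk')), Rmult_0_r, sinh_0. unfold Rdiv. ring.
    - replace k with 0 by lra. rewrite (proj1 (ell_cosk_zero 0)). unfold Rdiv. ring. }
  assert (Hy' : ell k y / cosk k y = 0) by (rewrite Hell; unfold Rdiv; ring).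
  destruct (Rtotal_order y 0) as [Hl|[Hl|Hl]]; [|contradiction|].
  - pose proof (ell_div_cosk_increasing k y 0 Hy H0 Hl). lra.
  - pose proof (ell_div_cosk_increasing k 0 y H0 Hy Hl). lra.
Qed.

Lemma ccurv_cosk_ell k y : ccurv k y = cosk k y / ell k y.
Proof.
  unfold ccurv. destruct (Rlt_dec 0 k) as [Hk|Hk]; [|destruct (Rlt_dec k 0) as [Hk'|Hk']].
  - destruct (ell_cosk_pos k y Hk) as [-> ->]. unfold Rdiv. rewrite Rinv_mult, Rinv_inv. ring.
  - destruct (ell_cosk_neg k y Hk') as [-> ->]. unfold Rdiv. rewrite Rinv_mult, Rinv_inv. ring.
  - replace k with 0 by lra. destruct (ell_cosk_zero y) as [-> ->]. reflexivity.
Qed.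

Lemma continuity_pt_eps f s : continuity_pt f s <->
  forall eps, 0 < eps -> exists d, 0 < d /\ forall t, Rabs (t - s) < d -> Rabs (f t - f s) < eps.
Proof.
  unfold continuity_pt, continue_in, limit1_in, limit_in. simpl. unfold R_dist, D_x, no_cond.
  split; intros H eps He; destruct (H eps He) as [d [Hd H']]; exists d; split; auto.
  - intros t Ht. destruct (Req_dec t s) as [->|Hne].
    + rewrite Rminus_diag, Rabs_R0. exact He.
    + apply H'. auto.
  - intros t [_ Ht]. auto.
Qed.

(* Coquelicot states the arithmetic rules over an abstract [AbsRing]; these instances do
   unify with the operations of [R]. *)
Lemma is_derive_Rplus f g x df dg : is_derive f x df -> is_derive g x dg ->
  is_derive (fun t => f t + g t) x (df + dg).
Proof. exact (is_derive_plus f g x df dg). Qed.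

Lemma is_derive_Rminus f g x df dg : is_derive f x df -> is_derive g x dg ->
  is_derive (fun t => f t - g t) x (df - dg).
Proof. exact (is_derive_minus f g x df dg). Qed.

Lemma is_derive_Rmult f g x df dg : is_derive f x df -> is_derive g x dg ->
  is_derive (fun t => f t * g t) x (df * g x + f x * dg).
Proof. intros Hf Hg. exact (is_derive_mult f g x df dg Hf Hg Rmult_comm). Qed.

Lemma is_derive_continuity_pt f x l : is_derive f x l -> continuity_pt f x.
Proof. intros H. apply derivable_continuous_pt. exists l. apply is_derive_Reals. exact H. Qed.

Lemma continuity_pt_neq0 f s : continuity_pt f s -> f s <> 0 ->
  exists d, 0 < d /\ forall t, Rabs (t - s) < d -> f t <> 0.
Proof.
  intros Hc Hs. destruct (proj1 (continuity_pt_eps f s) Hc (Rabs (f s))) as [d [Hd H]].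
  { apply Rabs_pos_lt. exact Hs. }
  exists d. split; auto. intros t Ht Hft. specialize (H t Ht).
  rewrite Hft, Rminus_0_l, Rabs_Ropp in H. lra.
Qed.

(* Caratheodory's formulation of differentiability: the difference quotient, extended
   at [y0] by the candidate derivative [l]. *)
Definition slope (f : R -> R) (y0 l y : R) : R :=
  if Req_EM_T y y0 then l else (f y - f y0) / (y - y0).

Lemma slope_spec f y0 l y : f y - f y0 = (y - y0) * slope f y0 l y.
Proof.
  unfold slope. destruct (Req_EM_T y y0) as [->|H]; [ring | field; lra].
Qed.

Lemma slope_at f y0 l : slope f y0 l y0 = l.
Proof. unfold slope. destruct (Req_EM_T y0 y0); [reflexivity | lra]. Qed.

Lemma continuity_pt_slope f y0 l : is_derive f y0 l -> continuity_pt (slope f y0 l) y0.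
Proof.
  intros Hf. apply is_derive_Reals in Hf. apply continuity_pt_eps. intros eps He.
  destruct (Hf eps He) as [d Hd]. exists d. split; [apply cond_pos|].
  intros y Hy. rewrite slope_at. unfold slope. destruct (Req_EM_T y y0) as [->|Hne].
  - rewrite Rminus_diag, Rabs_R0. exact He.
  - specialize (Hd (y - y0)). replace (y0 + (y - y0)) with y in Hd by ring.
    apply Hd; [lra | exact Hy].
Qed.

Lemma is_derive_of_slope f s S :
  (exists d, 0 < d /\ forall t, Rabs (t - s) < d -> f t - f s = (t - s) * S t) ->
  continuity_pt S s -> is_derive f s (S s).
Proof.
  intros [d0 [Hd0 Heq]] Hc. apply is_derive_Reals. intros eps He.
  destruct (proj1 (continuity_pt_eps S s) Hc eps He) as [d1 [Hd1 H1]].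
  assert (Hm : 0 < Rmin d0 d1) by (apply Rmin_pos; auto).
  exists (mkposreal _ Hm). simpl. intros h Hh Hlt.
  pose proof (Rmin_l d0 d1). pose proof (Rmin_r d0 d1).
  replace (s + h - s) with h in * by ring.
  rewrite (Heq (s + h)) by (replace (s + h - s) with h by ring; lra).
  replace (s + h - s) with h by ring. replace (h * S (s + h) / h) with (S (s + h)) by (field; auto).
  apply H1. replace (s + h - s) with h by ring. lra.
Qed.

Lemma continuity_pt_of_increasing_comp (tau phi : R -> R) (D : R -> Prop) s :
  (forall y1 y2, D y1 -> D y2 -> y1 < y2 -> tau y1 < tau y2) ->
  (exists e, 0 < e /\ forall y, Rabs (y - phi s) < e -> D y) ->
  (forall t, D (phi t)) ->
  continuity_pt (fun t => tau (phi t)) s -> continuity_pt phi s.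
Proof.
  intros Hmono [e [He HD]] HDphi Hc. apply continuity_pt_eps. intros eps Heps.
  set (e' := Rmin eps (e / 2)).
  assert (He' : 0 < e') by (apply Rmin_pos; lra).
  pose proof (Rmin_l eps (e / 2)). pose proof (Rmin_r eps (e / 2)). fold e' in H, H0.
  assert (Dnear : forall y, Rabs (y - phi s) <= e' -> D y) by (intros y Hy; apply HD; lra).
  assert (Dp : D (phi s + e')) by (apply Dnear; rewrite Rplus_minus_l, Rabs_pos_eq; lra).
  assert (Dm : D (phi s - e')).
  { apply Dnear. replace (phi s - e' - phi s) with (- e') by ring.
    rewrite Rabs_Ropp, Rabs_pos_eq; lra. }
  assert (D0 : D (phi s)) by (apply Dnear; rewrite Rminus_diag, Rabs_R0; lra).
  pose proof (Hmono _ _ D0 Dp ltac:(lra)). pose proof (Hmono _ _ Dm D0 ltac:(lra)).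
  set (m := Rmin (tau (phi s + e') - tau (phi s)) (tau (phi s) - tau (phi s - e'))).
  assert (Hm : 0 < m) by (apply Rmin_pos; lra).
  pose proof (Rmin_l (tau (phi s + e') - tau (phi s)) (tau (phi s) - tau (phi s - e'))).
  pose proof (Rmin_r (tau (phi s + e') - tau (phi s)) (tau (phi s) - tau (phi s - e'))).
  fold m in H3, H4.
  destruct (proj1 (continuity_pt_eps _ s) Hc m Hm) as [d [Hd Hnear]].
  exists d. split; auto. intros t Ht. specialize (Hnear t Ht). apply Rabs_def2 in Hnear.
  apply Rabs_def1.
  - destruct (Rlt_le_dec (phi t) (phi s + e')) as [Hl|Hl]; [lra|].
    destruct (Req_dec (phi t) (phi s + e')) as [Heq|Hne]; [rewrite Heq in Hnear; lra|].
    pose proof (Hmono _ _ Dp (HDphi t) ltac:(lra)). lra.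
  - destruct (Rlt_le_dec (phi s - e') (phi t)) as [Hl|Hl]; [lra|].
    destruct (Req_dec (phi t) (phi s - e')) as [Heq|Hne]; [rewrite Heq in Hnear; lra|].
    pose proof (Hmono _ _ (HDphi t) Dm ltac:(lra)). lra.
Qed.

Lemma is_derive_implicit (y a b p q : R -> R) s dp dq dm :
  (forall t, a t * p (y t) + b t * q (y t) = 0) ->
  continuity_pt y s -> continuity_pt a s -> continuity_pt b s ->
  is_derive p (y s) dp -> is_derive q (y s) dq ->
  is_derive (fun t => a t * p (y s) + b t * q (y s)) s dm ->
  a s * dp + b s * dq <> 0 ->
  is_derive y s (- dm / (a s * dp + b s * dq)).
Proof.
  intros Hrel Hy Ha Hb Hp Hq Hm Hnz.
  set (m := fun t => a t * p (y s) + b t * q (y s)) in Hm.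
  set (H := fun t => a t * slope p (y s) dp (y t) + b t * slope q (y s) dq (y t)).
  assert (HH : continuity_pt H s).
  { apply continuity_pt_plus; apply continuity_pt_mult; auto;
      apply (continuity_pt_comp y); auto; apply continuity_pt_slope; auto. }
  assert (Hs : H s = a s * dp + b s * dq) by (unfold H; rewrite !slope_at; reflexivity).
  destruct (continuity_pt_neq0 H s HH ltac:(rewrite Hs; exact Hnz)) as [d [Hd HHnz]].
  replace (- dm / (a s * dp + b s * dq)) with (- slope m s dm s / H s)
    by (rewrite slope_at, Hs; reflexivity).
  apply (is_derive_of_slope y s (fun t => - slope m s dm t / H t)).
  - exists d. split; auto. intros t Ht.
    (* once the slopes are expanded this is [Hrel t - Hrel s] *)
    assert (Hexp : m t - m s + (y t - y s) * H t = 0).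
    { unfold H. rewrite !Rmult_plus_distr_l, <- !Rmult_assoc,
        !(Rmult_comm (y t - y s)), !Rmult_assoc, <- !slope_spec.
      pose proof (Hrel t). pose proof (Hrel s). unfold m. lra. }
    rewrite slope_spec with (l := dm) in Hexp. specialize (HHnz t Ht).
    field_simplify; [|exact HHnz]. apply (Rmult_eq_reg_r (H t)); [|exact HHnz].
    unfold Rdiv. rewrite Rmult_assoc, Rinv_l by exact HHnz. lra.
  - apply continuity_pt_div; [apply continuity_pt_opp, continuity_pt_slope; exact Hm | exact HH |].
    rewrite Hs. exact Hnz.
Qed.

Lemma increasing_left_inverse (f : R -> R) :
  (forall s1 s2, s1 < s2 -> f s1 < f s2) -> exists g : R -> R, forall s, g (f s) = s.
Proof.
  intros Hinc. exists (fun y => epsilon (inhabits 0) (fun s => f s = y)). intros s.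
  pose proof (epsilon_spec (inhabits 0) (fun t => f t = f s) (ex_intro _ s eq_refl)) as Hspec.
  set (t := epsilon _ _) in *. destruct (Rtotal_order t s) as [Hl|[Hl|Hl]]; auto;
    apply Hinc in Hl; lra.
Qed.

Lemma is_derive_inverse (f g : R -> R) s l :
  continuity f -> (forall s1 s2, s1 < s2 -> f s1 < f s2) -> (forall s, g (f s) = s) ->
  is_derive f s l -> 0 < l -> is_derive g (f s) (/ l).
Proof.
  intros Hcont Hinc Hgf Hf Hl.
  assert (Hfg : forall y, Rabs (y - f s) < Rmin (f s - f (s - 1)) (f (s + 1) - f s) -> f (g y) = y).
  { intros y Hy. pose proof (Hinc (s - 1) s ltac:(lra)). pose proof (Hinc s (s + 1) ltac:(lra)).
    pose proof (Rmin_l (f s - f (s - 1)) (f (s + 1) - f s)).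
    pose proof (Rmin_r (f s - f (s - 1)) (f (s + 1) - f s)). apply Rabs_def2 in Hy.
    destruct (IVT_gen f (s - 1) (s + 1) y Hcont) as [z [_ <-]].
    - rewrite Rmin_left, Rmax_right by lra. lra.
    - rewrite Hgf. reflexivity. }
  set (d := Rmin (f s - f (s - 1)) (f (s + 1) - f s)) in Hfg.
  assert (Hd : 0 < d).
  { apply Rmin_pos; pose proof (Hinc (s - 1) s); pose proof (Hinc s (s + 1)); lra. }
  assert (Hgc : continuity_pt g (f s)).
  { apply (continuity_pt_of_increasing_comp f g (fun _ => True)); auto.
    - exists 1. split; auto; lra.
    - apply (continuity_pt_ext_loc (fun y => y)); [|apply continuity_pt_id].
      exists (mkposreal d Hd). intros y Hy. symmetry. apply Hfg. exact Hy. }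
  set (Sf := slope f s l).
  assert (HSf : forall z, 0 < Sf z).
  { intros z. unfold Sf, slope. destruct (Req_EM_T z s) as [_|Hne]; auto.
    destruct (Rtotal_order z s) as [Hlt|[Heq|Hlt]]; [|contradiction|];
      pose proof (Hinc _ _ Hlt); [apply Rdiv_neg_neg | apply Rdiv_lt_0_compat]; lra. }
  replace (/ l) with (/ Sf (g (f s))) by (rewrite Hgf; unfold Sf; rewrite slope_at; reflexivity).
  apply (is_derive_of_slope g (f s) (fun y => / Sf (g y))).
  - exists d. split; auto. intros y Hy.
    pose proof (slope_spec f s l (g y)) as E. fold Sf in E. rewrite Hfg in E by exact Hy.
    rewrite Hgf, E. pose proof (HSf (g y)). field. lra.
  - apply continuity_pt_inv; [|pose proof (HSf (g (f s))); lra].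
    apply (continuity_pt_comp g Sf); auto. rewrite Hgf. apply continuity_pt_slope. exact Hf.
Qed.

(* Planar coordinates in the frame (dirO w, its rotation by pi/2). *)
Definition along (w : R) (v : V3) : R := v1 v * cos w + v2 v * sin w.
Definition across (w : R) (v : V3) : R := v2 v * cos w - v1 v * sin w.

Lemma v1_frame w v : v1 v = along w v * cos w - across w v * sin w.
Proof.
  unfold along, across. pose proof (sin2_cos2 w) as H. unfold Rsqr in H.
  transitivity (v1 v * (sin w * sin w + cos w * cos w)); [rewrite H | ]; ring.
Qed.

Lemma v2_frame w v : v2 v = along w v * sin w + across w v * cos w.
Proof.
  unfold along, across. pose proof (sin2_cos2 w) as H. unfold Rsqr in H.
  transitivity (v2 v * (sin w * sin w + cos w * cos w)); [rewrite H | ]; ring.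
Qed.

Lemma planar_dot_frame w p q :
  v1 p * v1 q + v2 p * v2 q = along w p * along w q + across w p * across w q.
Proof.
  unfold along, across. pose proof (sin2_cos2 w) as H. unfold Rsqr in H.
  transitivity ((v1 p * v1 q + v2 p * v2 q) * (sin w * sin w + cos w * cos w));
    [rewrite H | ]; ring.
Qed.

Definition has_vderive (Q : R -> V3) (t : R) : Prop :=
  is_derive (fun u => v1 (Q u)) t (v1 (vderive Q t)) /\
  is_derive (fun u => v2 (Q u)) t (v2 (vderive Q t)) /\
  is_derive (fun u => v3 (Q u)) t (v3 (vderive Q t)).

Lemma C2curve_has_vderive P t : C2curve P -> has_vderive P t /\ has_vderive (vderive P) t.
Proof.
  intros (H1 & H2 & H3).
  destruct (H1 t) as (A1 & B1 & _), (H2 t) as (A2 & B2 & _), (H3 t) as (A3 & B3 & _).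
  repeat split; apply Derive_correct; assumption.
Qed.

Lemma is_derive_along (w : R -> R) (Q : R -> V3) t dw :
  has_vderive Q t -> is_derive w t dw ->
  is_derive (fun t => along (w t) (Q t)) t
            (along (w t) (vderive Q t) + dw * across (w t) (Q t)).
Proof.
  intros (H1 & H2 & _) Hw. unfold along, across.
  pose proof (is_derive_comp cos w t _ _ (is_derive_cos (w t)) Hw) as Hc.
  pose proof (is_derive_comp sin w t _ _ (is_derive_sin (w t)) Hw) as Hs.
  eapply is_derive_ext; [intros; reflexivity|].
  replace (v1 (vderive Q t) * cos (w t) + v2 (vderive Q t) * sin (w t)
           + dw * (v2 (Q t) * cos (w t) - v1 (Q t) * sin (w t)))
    with ((v1 (vderive Q t) * cos (w t) + v1 (Q t) * (dw * - sin (w t)))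
          + (v2 (vderive Q t) * sin (w t) + v2 (Q t) * (dw * cos (w t)))) by ring.
  apply is_derive_Rplus.
  - exact (is_derive_Rmult (fun t => v1 (Q t)) (fun t => cos (w t)) t _ _ H1 Hc).
  - exact (is_derive_Rmult (fun t => v2 (Q t)) (fun t => sin (w t)) t _ _ H2 Hs).
Qed.

Lemma vderive_geod k p u t :
  vderive (geod k p u) t = vadd (vscal (- k * ell k t) p) (vscal (cosk k t) u).
Proof.
  assert (Hlin : forall a b, Derive (fun t => (1 - k * acurv k t) * a + ell k t * b) t
                             = - k * ell k t * a + cosk k t * b).
  { intros a b. apply is_derive_unique.
    apply (is_derive_ext (fun t => a * cosk k t + b * ell k t)).
    { intros x. change (a * cosk k x + b * ell k x = (1 - k * acurv k x) * a + ell k x * b).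
      unfold cosk. ring. }
    replace (- k * ell k t * a + cosk k t * b) with (a * (- k * ell k t) + b * cosk k t) by ring.
    apply is_derive_Rplus; apply is_derive_scal; [apply is_derive_cosk | apply is_derive_ell]. }
  unfold vderive, geod, vadd, vscal. simpl. rewrite !Hlin. reflexivity.
Qed.

Lemma gam_point k w rr :
  gam k w rr = mkV3 (ell k rr * cos w) (ell k rr * sin w) (cosk k rr).
Proof. unfold gam, geod, vadd, vscal, Opt, dirO, cosk. simpl. f_equal; ring. Qed.

Lemma gam_velocity k w rr :
  vderive (gam k w) rr = mkV3 (cosk k rr * cos w) (cosk k rr * sin w) (- k * ell k rr).
Proof. unfold gam. rewrite vderive_geod. unfold vadd, vscal, Opt, dirO. simpl. f_equal; ring. Qed.

Lemma rotcw_gam k w rr :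
  rotcw k (gam k w rr) (vderive (gam k w) rr) = mkV3 (sin w) (- cos w) 0.
Proof.
  rewrite gam_point, gam_velocity. pose proof (cosk_ell_pythagoras k rr) as Hp.
  unfold rotcw, rotccw, vscal. simpl. f_equal.
  - transitivity (sin w * (cosk k rr * cosk k rr + k * (ell k rr * ell k rr))); [ring|].
    rewrite Hp. ring.
  - transitivity (- cos w * (cosk k rr * cosk k rr + k * (ell k rr * ell k rr))); [ring|].
    rewrite Hp. ring.
  - ring.
Qed.

(* The velocity of gamma_w at F is normal to the plane through O containing lambda. *)
Lemma gmet_gam_velocity k w rr v : (k = 0 -> v3 v = 0) ->
  gmet k (vderive (gam k w) rr) v = cosk k rr * along w v - ell k rr * v3 v.
Proof.
  intros Hflat. rewrite gam_velocity. unfold gmet, along. simpl.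
  destruct (Req_EM_T k 0) as [Hk|Hk].
  - rewrite (Hflat Hk). ring.
  - field. exact Hk.
Qed.

Lemma support_point_coords k K P s w rr xx :
  support_data k K P s w rr xx ->
  along w (P s) = cosk k xx * ell k rr /\ across w (P s) = - ell k xx /\
  v3 (P s) = cosk k xx * cosk k rr.
Proof.
  intros (_ & _ & _ & HP & _). cbv zeta in HP. rewrite rotcw_gam, gam_point in HP.
  rewrite HP. unfold along, across, geod, vadd, vscal. simpl. fold (cosk k xx).
  pose proof (sin2_cos2 w) as H. unfold Rsqr in H.
  split; [|split].
  - transitivity (cosk k xx * ell k rr * (sin w * sin w + cos w * cos w)); [ring | rewrite H; ring].
  - transitivity (- ell k xx * (sin w * sin w + cos w * cos w)); [ring | rewrite H; ring].
  - ring.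
Qed.

Lemma support_tangent k K P s w rr xx :
  support_data k K P s w rr xx -> (k = 0 -> v3 (vderive P s) = 0) ->
  cosk k rr * along w (vderive P s) - ell k rr * v3 (vderive P s) = 0.
Proof.
  intros Hsd Hflat. pose proof (support_point_coords k K P s w rr xx Hsd) as (HPa & _ & HP3).
  destruct Hsd as ([t0 [HF Hperp]] & _). cbv zeta in HF, Hperp.
  set (T := vderive P s) in *.
  set (n := fun v => cosk k rr * along w v - ell k rr * v3 v).
  assert (Hlin : forall a b p q, n (vadd (vscal a p) (vscal b q)) = a * n p + b * n q)
    by (intros; unfold n, along, vadd, vscal; simpl; ring).
  assert (HnP : n (P s) = 0) by (unfold n; rewrite HPa, HP3; ring).
  assert (HnF : n (gam k w rr) = 0).
  { unfold n, along. rewrite gam_point. simpl. pose proof (sin2_cos2 w) as H. unfold Rsqr in H.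
    transitivity (cosk k rr * ell k rr * (sin w * sin w + cos w * cos w - 1));
      [ring | rewrite H; ring]. }
  assert (Hlt : ell k t0 * n T = 0).
  { rewrite HF in HnF. unfold geod in HnF. rewrite Hlin, HnP in HnF. fold (cosk k t0) in HnF. lra. }
  assert (HCt : cosk k t0 * n T = 0).
  { rewrite vderive_geod, gmet_gam_velocity in Hperp.
    - fold (n (vadd (vscal (- k * ell k t0) (P s)) (vscal (cosk k t0) T))) in Hperp.
      rewrite Hlin, HnP in Hperp. lra.
    - intros Hk. unfold vadd, vscal. cbn [v3]. rewrite (Hflat Hk), Hk. ring. }
  fold (n T). pose proof (cosk_ell_pythagoras k t0) as Hp.
  transitivity (cosk k t0 * (cosk k t0 * n T) + k * ell k t0 * (ell k t0 * n T));
    [transitivity (n T * (cosk k t0 * cosk k t0 + k * (ell k t0 * ell k t0))); [rewrite Hp|] |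
     rewrite HCt, Hlt]; ring.
Qed.

(* Solving the two linear conditions on the velocity (it lies in the plane of lambda and is
   tangent to M at P) leaves one unknown, fixed up to sign by unit speed. *)
Lemma tangent_frame_algebra k Cr lr Cx lx a b T3 :
  Cr * Cr + k * (lr * lr) = 1 -> Cx * Cx + k * (lx * lx) = 1 -> 0 < Cr -> 0 < Cx ->
  Cr * a - lr * T3 = 0 -> k * (Cx * lr * a - lx * b) + Cx * Cr * T3 = 0 ->
  a * a + b * b + (if Req_EM_T k 0 then 0 else T3 * T3 / k) = 1 ->
  exists mu, mu * mu = 1 /\
    a = - mu * k * lx * lr /\ b = - mu * Cx /\ T3 = - mu * k * lx * Cr.
Proof.
  intros Hr Hx HCr HCx Hplane Htan Hunit.
  exists (- b / Cx).
  assert (HT3 : T3 = - (- b / Cx) * k * lx * Cr).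
  { assert (E : Cx * T3 = k * lx * Cr * b).
    { apply Rminus_diag_uniq.
      transitivity (Cr * (k * (Cx * lr * a - lx * b) + Cx * Cr * T3)
                    - k * Cx * lr * (Cr * a - lr * T3) + Cx * T3 * (1 - (Cr * Cr + k * (lr * lr))));
        [ring | rewrite Htan, Hplane, Hr; ring]. }
    replace T3 with (Cx * T3 / Cx) by (field; lra). rewrite E. field. lra. }
  assert (Ha : a = - (- b / Cx) * k * lx * lr).
  { apply (Rmult_eq_reg_l Cr); [|lra]. replace (Cr * a) with (lr * T3) by lra. rewrite HT3. ring. }
  repeat split; [| exact Ha | field; lra | exact HT3].
  rewrite Ha, HT3 in Hunit. destruct (Req_EM_T k 0) as [Hk|Hk].
  - subst k. replace (b * b) with (- b / Cx * (- b / Cx) * (Cx * Cx)) in Hunit by (field; lra).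
    replace (Cx * Cx) with 1 in Hunit by lra. lra.
  - assert (E : k * (lx * lx) * (Cr * Cr + k * (lr * lr)) + Cx * Cx = 1) by (rewrite Hr; lra).
    replace (- b / Cx * (- b / Cx)) with
      ((- b / Cx * (- b / Cx)) * (k * (lx * lx) * (Cr * Cr + k * (lr * lr)) + Cx * Cx))
      by (rewrite E; ring).
    rewrite <- Hunit. field. lra.
Qed.

Lemma rotccw_frame k w rr xx mu p t :
  along w p = cosk k xx * ell k rr -> across w p = - ell k xx ->
  v3 p = cosk k xx * cosk k rr ->
  along w t = - mu * k * ell k xx * ell k rr -> across w t = - mu * cosk k xx ->
  v3 t = - mu * k * ell k xx * cosk k rr ->
  rotccw k p t = vscal mu (vderive (gam k w) rr).
Proof.
  intros Hpa Hpc Hp3 Hta Htc Ht3. rewrite gam_velocity.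
  unfold rotccw, vscal. cbn [v1 v2 v3].
  rewrite (v1_frame w p), (v2_frame w p), (v1_frame w t), (v2_frame w t).
  rewrite Hpa, Hpc, Hp3, Hta, Htc, Ht3.
  pose proof (cosk_ell_pythagoras k xx) as Hx. pose proof (sin2_cos2 w) as Hw. unfold Rsqr in Hw.
  set (Cx := cosk k xx) in *. set (lx := ell k xx) in *.
  set (Cr := cosk k rr). set (lr := ell k rr).
  f_equal.
  - transitivity (mu * (Cr * cos w) * (Cx * Cx + k * (lx * lx))); [ring | rewrite Hx; ring].
  - transitivity (mu * (Cr * sin w) * (Cx * Cx + k * (lx * lx))); [ring | rewrite Hx; ring].
  - transitivity (mu * (- k * lr) * (Cx * Cx + k * (lx * lx)) * (sin w * sin w + cos w * cos w));
      [ring | rewrite Hx, Hw; ring].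
Qed.

Section BoundaryCurve.

Variables (k : R) (K : V3 -> Prop) (P : R -> V3) (om r x : R -> R).
Hypothesis P_on_M : forall s, inM k (P s).
Hypothesis P_v3_pos : forall s, 0 < v3 (P s).
Hypothesis P_C2 : C2curve P.
Hypothesis P_unit : forall s, unitM k (vderive P s).
Hypothesis P_support : forall s, support_data k K P s (om s) (r s) (x s).

Lemma flat_vertical_derivatives s :
  k = 0 -> v3 (vderive P s) = 0 /\ v3 (vderive (vderive P) s) = 0.
Proof.
  intros Hk.
  assert (H1 : forall t, v3 (P t) = 1).
  { intros t. destruct (P_on_M t) as [Hq [Hp|Hp]]; unfold kdot in Hq; subst k; [lra | nra]. }
  assert (H2 : forall t, v3 (vderive P t) = 0).
  { intros t. unfold vderive. cbn [v3].
    rewrite (Derive_ext _ (fun _ => 1) t H1). apply Derive_const. }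
  split; [apply H2|]. unfold vderive at 1. cbn [v3].
  rewrite (Derive_ext _ (fun _ => 0) s H2). apply Derive_const.
Qed.

Lemma kdot_position_velocity s : kdot k (P s) (vderive P s) = 0.
Proof.
  destruct P_C2 as (H1 & H2 & H3).
  destruct (H1 s) as (E1 & _), (H2 s) as (E2 & _), (H3 s) as (E3 & _).
  assert (Hd : is_derive (fun t => kdot k (P t) (P t)) s (2 * kdot k (P s) (vderive P s))).
  { unfold kdot, vderive. cbn [v1 v2 v3].
    set (p1 := fun t => v1 (P t)) in *. set (p2 := fun t => v2 (P t)) in *.
    set (p3 := fun t => v3 (P t)) in *.
    change (is_derive (fun t => k * (p1 t * p1 t + p2 t * p2 t) + p3 t * p3 t) s
              (2 * (k * (p1 s * Derive p1 s + p2 s * Derive p2 s) + p3 s * Derive p3 s))).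
    auto_derive; [repeat split; assumption | unfold p1, p2, p3; ring]. }
  assert (Hc : is_derive (fun t => kdot k (P t) (P t)) s 0).
  { apply (is_derive_ext (fun _ => 1)); [intros t; symmetry; apply P_on_M | auto_derive; auto]. }
  pose proof (is_derive_unique _ _ _ Hd) as U. rewrite (is_derive_unique _ _ _ Hc) in U. lra.
Qed.

Lemma quarter_range_r s : quarter_range k (r s).
Proof. destruct (P_support s) as (_ & _ & H & _). exact H. Qed.

Lemma cosk_r_pos s : 0 < cosk k (r s).
Proof. apply cosk_pos, quarter_range_r. Qed.

Lemma cosk_x_pos s : 0 < cosk k (x s).
Proof.
  pose proof (P_v3_pos s) as H. pose proof (cosk_r_pos s).
  rewrite (proj2 (proj2 (support_point_coords k K P s _ _ _ (P_support s)))) in H. nra.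
Qed.

Lemma tangent_frame s : exists mu, mu * mu = 1 /\
  along (om s) (vderive P s) = - mu * k * ell k (x s) * ell k (r s) /\
  across (om s) (vderive P s) = - mu * cosk k (x s) /\
  v3 (vderive P s) = - mu * k * ell k (x s) * cosk k (r s) /\
  kappa_g k P s = mu * (cosk k (r s) * along (om s) (vderive (vderive P) s)
                        - ell k (r s) * v3 (vderive (vderive P) s)).
Proof.
  destruct (support_point_coords k K P s _ _ _ (P_support s)) as (HPa & HPc & HP3).
  pose proof (flat_vertical_derivatives s) as Hflat.
  pose proof (support_tangent k K P s _ _ _ (P_support s) (fun Hk => proj1 (Hflat Hk))) as Hplane.
  set (w := om s) in *. set (T := vderive P s) in *. set (V := vderive (vderive P) s) in *.
  assert (Htan : k * (cosk k (x s) * ell k (r s) * along w T - ell k (x s) * across w T)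
                 + cosk k (x s) * cosk k (r s) * v3 T = 0).
  { rewrite <- (kdot_position_velocity s). unfold kdot. fold T.
    rewrite (planar_dot_frame w (P s) T), HPa, HPc, HP3. ring. }
  assert (Hunit : along w T * along w T + across w T * across w T
                  + (if Req_EM_T k 0 then 0 else v3 T * v3 T / k) = 1).
  { rewrite <- (planar_dot_frame w T T). exact (P_unit s). }
  destruct (tangent_frame_algebra k _ _ _ _ _ _ _ (cosk_ell_pythagoras k (r s))
              (cosk_ell_pythagoras k (x s)) (cosk_r_pos s) (cosk_x_pos s) Hplane Htan Hunit)
    as (mu & Hmu & Ha & Hb & HT3).
  exists mu. repeat split; [exact Hmu | exact Ha | exact Hb | exact HT3 |].
  unfold kappa_g. fold T V.
  rewrite (rotccw_frame k w (r s) (x s) mu (P s) T HPa HPc HP3 Ha Hb HT3).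
  rewrite <- gmet_gam_velocity by (intros Hk; apply (Hflat Hk)).
  unfold gmet, vscal. cbn [v1 v2 v3]. destruct (Req_EM_T k 0); [ring | unfold Rdiv; ring].
Qed.

Lemma cross_along_derive w s :
  is_derive (fun t => along w (P t) * v3 (vderive P t) - along w (vderive P t) * v3 (P t)) s
    (along w (P s) * v3 (vderive (vderive P) s) - along w (vderive (vderive P) s) * v3 (P s)).
Proof.
  destruct (C2curve_has_vderive P s P_C2) as (HP & HT).
  assert (Hconst : is_derive (fun _ : R => w) s 0) by exact (is_derive_const w s).
  pose proof (is_derive_along (fun _ => w) P s 0 HP Hconst) as DPa.
  pose proof (is_derive_along (fun _ => w) (vderive P) s 0 HT Hconst) as DTa.
  destruct HP as (_ & _ & DP3), HT as (_ & _ & DT3).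
  pose proof (is_derive_Rminus _ _ s _ _ (is_derive_Rmult _ _ s _ _ DPa DT3)
                (is_derive_Rmult _ _ s _ _ DTa DP3)) as D.
  match type of D with is_derive _ _ ?v => replace (along w (P s) * _ - _) with v by ring end.
  exact D.
Qed.

Hypothesis om_cont : continuity om.

Lemma om_derive s : is_derive om s (cosk k (x s) * kappa_g k P s / cosk k (r s)).
Proof.
  set (a1 := fun t => v1 (P t) * v3 (vderive P t) - v1 (vderive P t) * v3 (P t)).
  set (a2 := fun t => v2 (P t) * v3 (vderive P t) - v2 (vderive P t) * v3 (P t)).
  assert (Hrel : forall t, a1 t * cos (om t) + a2 t * sin (om t) = 0).
  { intros t. destruct (tangent_frame t) as (mu & _ & Ta & _ & T3 & _).
    destruct (support_point_coords k K P t _ _ _ (P_support t)) as (Pa & _ & P3).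
    transitivity (along (om t) (P t) * v3 (vderive P t) - along (om t) (vderive P t) * v3 (P t));
      [unfold a1, a2, along; ring | rewrite Pa, P3, Ta, T3; ring]. }
  assert (Hm : is_derive (fun t => a1 t * cos (om s) + a2 t * sin (om s)) s
      (along (om s) (P s) * v3 (vderive (vderive P) s)
       - along (om s) (vderive (vderive P) s) * v3 (P s))).
  { eapply is_derive_ext; [|exact (cross_along_derive (om s) s)].
    intros t. unfold a1, a2, along. cbn -[cos sin Rmult Rplus Rminus]. ring. }
  destruct (tangent_frame s) as (mu & Hmu & Ta & Tc & T3 & Hkappa).
  destruct (support_point_coords k K P s _ _ _ (P_support s)) as (Pa & Pc & P3).
  pose proof (cosk_r_pos s). pose proof (cosk_x_pos s).
  assert (Hden : a1 s * - sin (om s) + a2 s * cos (om s) = mu * cosk k (r s)).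
  { transitivity (across (om s) (P s) * v3 (vderive P s) - across (om s) (vderive P s) * v3 (P s));
      [unfold a1, a2, across; ring | rewrite Pc, P3, Tc, T3].
    transitivity (mu * cosk k (r s)
                  * (cosk k (x s) * cosk k (x s) + k * (ell k (x s) * ell k (x s))));
      [ring | rewrite cosk_ell_pythagoras; ring]. }
  assert (Hinv : / mu = mu).
  { apply (Rmult_eq_reg_l mu); [rewrite Rinv_r by (intros ->; lra); lra | intros ->; lra]. }
  destruct (C2curve_has_vderive P s P_C2) as ((DP1 & DP2 & DP3) & (DT1 & DT2 & DT3)).
  replace (cosk k (x s) * kappa_g k P s / cosk k (r s))
    with (- (along (om s) (P s) * v3 (vderive (vderive P) s)
             - along (om s) (vderive (vderive P) s) * v3 (P s))
          / (a1 s * - sin (om s) + a2 s * cos (om s))).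
  - apply (is_derive_implicit om a1 a2 cos sin); auto.
    + unfold a1. apply continuity_pt_minus; apply continuity_pt_mult;
        eapply is_derive_continuity_pt; eassumption.
    + unfold a2. apply continuity_pt_minus; apply continuity_pt_mult;
        eapply is_derive_continuity_pt; eassumption.
    + apply is_derive_cos.
    + apply is_derive_sin.
    + rewrite Hden. apply Rmult_integral_contrapositive. split; [intros ->|]; lra.
  - rewrite Hden, Hkappa, Pa, P3. unfold Rdiv. rewrite Rinv_mult, Hinv. field. lra.
Qed.

Lemma along_om_derive s : is_derive (fun t => along (om t) (P t)) s
  (along (om s) (vderive P s)
   + cosk k (x s) * kappa_g k P s / cosk k (r s) * across (om s) (P s)).
Proof. apply is_derive_along; [apply C2curve_has_vderive, P_C2 | apply om_derive]. Qed.

(* [r] is recovered from [ell r / cosk r = along P / v3 P], strictly increasing in [r]. *)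
Lemma r_continuous s : continuity_pt r s.
Proof.
  apply (continuity_pt_of_increasing_comp (fun y => ell k y / cosk k y) r (quarter_range k)).
  - intros; apply ell_div_cosk_increasing; assumption.
  - apply quarter_range_open, quarter_range_r.
  - exact quarter_range_r.
  - apply (continuity_pt_ext (fun t => along (om t) (P t) / v3 (P t))).
    + intros t. destruct (support_point_coords k K P t _ _ _ (P_support t)) as (-> & _ & ->).
      pose proof (cosk_r_pos t). pose proof (cosk_x_pos t). field. lra.
    + destruct (C2curve_has_vderive P s P_C2) as ((_ & _ & DP3) & _).
      pose proof (P_v3_pos s).
      apply continuity_pt_div; [| | lra]; eapply is_derive_continuity_pt;
        [apply along_om_derive | exact DP3].
Qed.

Lemma r_derive s : is_derive r s (- ell k (x s) * kappa_g k P s).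
Proof.
  destruct (C2curve_has_vderive P s P_C2) as ((_ & _ & DP3) & _).
  pose proof (along_om_derive s) as DA.
  set (w' := cosk k (x s) * kappa_g k P s / cosk k (r s)) in DA.
  assert (Hrel : forall t, along (om t) (P t) * cosk k (r t) + - v3 (P t) * ell k (r t) = 0).
  { intros t. destruct (support_point_coords k K P t _ _ _ (P_support t)) as (-> & _ & ->). ring. }
  assert (Hm : is_derive (fun t => along (om t) (P t) * cosk k (r s) + - v3 (P t) * ell k (r s)) s
                 (cosk k (r s) * (along (om s) (vderive P s) + w' * across (om s) (P s))
                  - ell k (r s) * v3 (vderive P s))).
  { apply (is_derive_ext (fun t => cosk k (r s) * along (om t) (P t) - ell k (r s) * v3 (P t)));
      [intros t; cbn -[cos sin Rmult Rplus Rminus Ropp]; ring|].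
    apply is_derive_Rminus; apply is_derive_scal; assumption. }
  destruct (tangent_frame s) as (mu & _ & Ta & Tc & T3 & _).
  destruct (support_point_coords k K P s _ _ _ (P_support s)) as (Pa & Pc & P3).
  pose proof (cosk_r_pos s). pose proof (cosk_x_pos s).
  assert (Hden : along (om s) (P s) * (- k * ell k (r s)) + - v3 (P s) * cosk k (r s)
                 = - cosk k (x s)).
  { rewrite Pa, P3. transitivity (- cosk k (x s) * (cosk k (r s) * cosk k (r s)
                                   + k * (ell k (r s) * ell k (r s)))); [ring|].
    rewrite cosk_ell_pythagoras. ring. }
  replace (- ell k (x s) * kappa_g k P s) with
    (- (cosk k (r s) * (along (om s) (vderive P s) + w' * across (om s) (P s))
        - ell k (r s) * v3 (vderive P s))
     / (along (om s) (P s) * (- k * ell k (r s)) + - v3 (P s) * cosk k (r s))).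
  - apply (is_derive_implicit r (fun t => along (om t) (P t)) (fun t => - v3 (P t))
             (cosk k) (ell k)); auto.
    + apply r_continuous.
    + eapply is_derive_continuity_pt. exact DA.
    + apply continuity_pt_opp. eapply is_derive_continuity_pt. exact DP3.
    + apply is_derive_cosk.
    + apply is_derive_ell.
    + rewrite Hden. lra.
  - rewrite Hden, Ta, Pc, T3. unfold w'. field. lra.
Qed.

Hypothesis kappa_pos : forall s, 0 < kappa_g k P s.

Lemma om_speed_pos s : 0 < cosk k (x s) * kappa_g k P s / cosk k (r s).
Proof.
  pose proof (cosk_r_pos s). pose proof (cosk_x_pos s). pose proof (kappa_pos s).
  apply Rdiv_lt_0_compat; [apply Rmult_lt_0_compat|]; lra.
Qed.

Lemma om_increasing s1 s2 : s1 < s2 -> om s1 < om s2.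
Proof.
  intros H12.
  apply (incr_function om m_infty p_infty (fun s => cosk k (x s) * kappa_g k P s / cosk k (r s)));
    simpl; auto; intros s _ _; [apply om_derive | apply om_speed_pos].
Qed.

Lemma support_function_derive (g : R -> R) s : (forall s, g (om s) = s) ->
  is_derive (fun y => r (g y)) (om s) (- cosk k (r s) * ell k (x s) / cosk k (x s)).
Proof.
  intros Hg.
  pose proof (is_derive_inverse om g s _ om_cont om_increasing Hg (om_derive s) (om_speed_pos s))
    as Dg.
  pose proof (eq_ind_r (fun z => is_derive r z _) (r_derive s) (Hg s)) as Dr.
  pose proof (is_derive_comp r g (om s) _ _ Dr Dg) as D.
  pose proof (cosk_r_pos s). pose proof (cosk_x_pos s). pose proof (kappa_pos s).
  match type of D with is_derive _ _ ?v => replace (- cosk k (r s) * _ / _) with v end.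
  - exact D.
  - rewrite Hg. cbn -[cosk ell kappa_g Rmult Ropp Rinv Rdiv]. field. lra.
Qed.

End BoundaryCurve.

Lemma boundary_in_model k K P L :
  convex_body k K -> arclength_boundary k K P L ->
  (forall s, inM k (P s)) /\ (forall s, 0 < v3 (P s)).
Proof.
  intros (HKM & _ & _ & _ & _ & Hhemi) (_ & _ & _ & Hbd & _).
  assert (HK : forall s, K (P s)) by (intros s; apply (Hbd (P s)); exists s; reflexivity).
  split; intros s; [apply HKM, HK|].
  destruct (HKM _ (HK s)) as [_ [Hk|Hp]]; [apply (Hhemi Hk), HK | exact Hp].
Qed.

Theorem mainTheorem8 (k : R) (K : V3 -> Prop) (P : R -> V3) (L : R)
    (om r x : R -> R) :
  convex_body k K ->
  arclength_boundary k K P L ->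
  ccw_oriented k K P ->
  (forall s, 0 < kappa_g k P s) ->
  continuity om ->
  (forall s, support_data k K P s (om s) (r s) (x s)) ->
  (forall s1 s2, s1 < s2 -> om s1 < om s2) /\
  exists h : R -> R,
    (forall s, r s = h (om s)) /\
    (forall s,
       is_derive h (om s)
         (- ((1 - k * acurv k (r s)) * ell k (x s)) / (1 - k * acurv k (x s))) /\
       (r s <> 0 ->
          is_derive h (om s) (- (ell k (r s) * ccurv k (r s)) / ccurv k (x s)))).
Proof.
  intros Hbody Hbd _ Hkappa Hom Hsd.
  destruct (boundary_in_model k K P L Hbody Hbd) as [HonM Hv3].
  destruct Hbd as (_ & _ & _ & _ & HC2 & Hunit).
  pose proof (om_increasing k K P om r x HonM Hv3 HC2 Hunit Hsd Hom Hkappa) as Hinc.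
  split; [exact Hinc|].
  destruct (increasing_left_inverse om Hinc) as [g Hg].
  exists (fun y => r (g y)). split; [intros s; rewrite Hg; reflexivity|]. intros s.
  pose proof (support_function_derive k K P om r x HonM Hv3 HC2 Hunit Hsd Hom Hkappa g s Hg) as Dh.
  pose proof (cosk_x_pos k K P om r x Hv3 Hsd s).
  fold (cosk k (r s)) (cosk k (x s)). split.
  - replace (- (cosk k (r s) * ell k (x s)) / cosk k (x s)) with
      (- cosk k (r s) * ell k (x s) / cosk k (x s)) by (unfold Rdiv; ring). exact Dh.
  - intros Hr0. rewrite !ccurv_cosk_ell.
    pose proof (ell_neq0 k (r s) (quarter_range_r k K P om r x Hsd s) Hr0).
    (* no hypothesis on [x s]: [Rinv_mult] and [Rinv_inv] hold even when [ell k (x s) = 0] *)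
    replace (- (ell k (r s) * (cosk k (r s) / ell k (r s))) / (cosk k (x s) / ell k (x s)))
      with (- cosk k (r s) * ell k (x s) / cosk k (x s))
      by (unfold Rdiv; rewrite Rinv_mult, Rinv_inv; field; lra).
    exact Dh.
Qed.
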